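(* Let $G$ be a $(k+1)$-critical hypergraph with $k\ge2$, and let $F\subseteq E(G)$ be a separating edge set of $G$ with $|F|\le k$. Then $|F|=k$ and there is an edge cut $(X,Y,F)$ of $G$ with the following properties: (a) every $k$-coloring $\varphi$ of $G[X]$ satisfies $|\varphi(X_F)|=1$, and every $k$-coloring $\varphi$ of $G[Y]$ satisfies $|\varphi(Y_F)|=k$ and, for every color $i\in\{1,\dots,k\}$, there is an edge $e\in F$ with $\varphi(e\cap Y)=\{i\}$; (b) each vertex of $Y_F$ is incident to exactly one edge of $F$; (c) if $|X_F|\ge2$, then the hypergraph obtained from $G[X]$ by adding the edge $X_F$ is $(k+1)$-critical; (d) the hypergraph obtained from $G[Y]$ by adding a new vertex $v$ and, for each edge $e\in F$, the new edge $(e\setminus X)\cup\{v\}$, is $(k+1)$-critical.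
   Context: A hypergraph is a pair $G=(V,E)$ of finite sets with $E\subseteq 2^V$ and $|e|\ge2$ for all $e\in E$. A $k$-coloring is a map $V\to\{1,\dots,k\}$ such that every edge contains two vertices of different colors; $\chi$ is the chromatic number. $G$ is $(k+1)$-critical if $\chi(G)=k+1$ but $\chi(H)\le k$ for every proper subhypergraph $H$. $G[X]$ has vertex set $X$ and the edges of $G$ contained in $X$. For $X\subseteq V(G)$, $\partial_G(X)$ is the set of edges meeting both $X$ and $V(G)\setminus X$. A separating edge set is a set $F\subseteq E(G)$ such that $G-F$ has more (connected) components than $G$. An edge cut of $G$ is a triple $(X,Y,F)$ with $X$ a non-empty proper subset of $V(G)$, $Y=V(G)\setminus X$, and $F=\partial_G(X)$; then $X_F$ (resp. $Y_F$) denotes the set of vertices of $X$ (resp. $Y$) incident to some edge of $F$. *)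

From mathcomp Require Import all_boot.
Set Implicit Arguments. Unset Strict Implicit. Unset Printing Implicit Defensive.

Record hgraph (T : finType) := HG { hV : {set T}; hE : {set {set T}} }.

Section Hyper.
Variable T : finType.
Implicit Types (G H : hgraph T) (A X : {set T}) (F : {set {set T}}).

Definition is_hypergraph G :=
  forall e, e \in hE G -> e \subset hV G /\ 2 <= #|e|.

Definition subhypergraph H G :=
  [/\ is_hypergraph H, hV H \subset hV G & hE H \subset hE G].
Definition proper_subhypergraph H G := subhypergraph H G /\ H <> G.

(* colorings: colors are 0,...,n-1 (a relabelling of 1,...,n) *)
Definition proper_col G (f : T -> nat) :=
  forall e, e \in hE G -> exists x, exists y, [/\ x \in e, y \in e & f x <> f y].
Definition is_coloring G n (f : T -> nat) :=
  (forall x, x \in hV G -> f x < n) /\ proper_col G f.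
Definition colorable G n := exists f, is_coloring G n f.

Definition chi_is G n := colorable G n /\ forall m, m < n -> ~ colorable G m.

Definition critical G n :=
  chi_is G n /\ forall H, proper_subhypergraph H G -> exists2 m, m <= n.-1 & chi_is H m.

Definition induced G X := HG X [set e in hE G | e \subset X].

Definition del_edges G F := HG (hV G) (hE G :\: F).

Definition adj G : rel T := fun x y => [exists e in hE G, (x \in e) && (y \in e)].
Definition components G : {set {set T}} :=
  [set [set y in hV G | connect (adj G) x y] | x in hV G].

Definition separating G F :=
  F \subset hE G /\ #|components G| < #|components (del_edges G F)|.

Definition boundary G X : {set {set T}} :=
  [set e in hE G | (e :&: X != set0) && (e :&: (hV G :\: X) != set0)].

Definition incident_part A F : {set T} := [set x in A | [exists e in F, x \in e]].

Definition img (f : T -> nat) A : seq nat := undup [seq f x | x <- enum A].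

Definition add_edge G A := HG (hV G) (A |: hE G).

(* with Y = V \ X: G[Y] plus a new vertex None and edges (e \ X) ∪ {None}, e in F *)
Definition glue_new_vertex G X F : hgraph (option T) :=
  let Y := hV G :\: X in
  HG (None |: [set Some y | y : T in Y])
     ([set [set Some y | y : T in e :\: X] :|: [set None] | e : {set T} in F]
        :|: [set [set Some y | y : T in e] | e : {set T} in hE (induced G Y)]).

End Hyper.

(* A separating set F of size at most k contains the boundary of a cut (X, Y), namely a
   component of G - F and its complement.  Fix k-colorings phi of G[X] and psi of G[Y].  For
   every permutation p of the colors, phi on X together with p o psi on Y is not a k-coloring
   of G, so some boundary edge is monochromatic.  The k rotations of the colors yield k
   distinct such edges; hence the boundary is all of F, |F| = k, every edge of F is
   monochromatic on each side, and for each p the monochromatic edge is unique.  Applied to a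
   permutation matching two prescribed pairs of colors, uniqueness shows that on two distinct
   edges of F exactly one of phi and psi repeats a color.  Consequently either every k-coloring
   of G[X] is constant on X_F, and then every k-coloring of G[Y] gives the edges of F distinct
   colors, or the same holds with X and Y exchanged.  For (c) and (d) it suffices that the new
   hypergraphs are not k-colorable but become so after deleting any edge; such colorings are
   assembled from a k-coloring of G minus one edge. *)

From mathcomp Require Import all_boot.
From Stdlib Require Import Classical Lia.
Set Implicit Arguments. Unset Strict Implicit. Unset Printing Implicit Defensive.

Section Colorings.
Variable T : finType.
Implicit Types (G H : hgraph T) (A B X e : {set T}) (F : {set {set T}}).

Definition proper_edge (f : T -> nat) (e : {set T}) :=
  exists x, exists y, [/\ x \in e, y \in e & f x <> f y].

Definition const_on (f : T -> nat) A := forall x y, x \in A -> y \in A -> f x = f y.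

Lemma not_proper_edge_const f e : ~ proper_edge f e -> const_on f e.
Proof.
move=> nf x y xe ye; apply: NNPP => fxy; apply: nf; by exists x, y.
Qed.

Lemma colorable_le G m n : m <= n -> colorable G m -> colorable G n.
Proof.
move=> mn [f [fV fE]]; exists f; split=> // x /fV fx; exact: leq_trans fx mn.
Qed.

Lemma colorable_chi G n : colorable G n -> exists2 m, m <= n & chi_is G m.
Proof.
elim: n => [|n IHn] Gn; first by exists 0 => //; split=> // m.
case: (classic (colorable G n)) => [/IHn [m mn Gm]|nGn]; first by exists m => //; exact: leqW.
exists n.+1 => //; split=> // m mn Gm; apply: nGn; exact: colorable_le Gm.
Qed.

Lemma coloring_sub G H n f : is_coloring G n f -> hV H \subset hV G ->
  hE H \subset hE G -> is_coloring H n f.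
Proof.
by case=> fV fE /subsetP sV /subsetP sE; split=> [x /sV /fV|e /sE /fE].
Qed.

Lemma critical_not_colorable G k : critical G k.+1 -> ~ colorable G k.
Proof. by case=> [[_ nG] _]; apply: nG. Qed.

Lemma critical_proper_colorable G k H :
  critical G k.+1 -> proper_subhypergraph H G -> colorable H k.
Proof. by case=> _ crit /crit [m mk [Hm _]]; exact: colorable_le Hm. Qed.

Lemma del_edge_proper G e : is_hypergraph G -> e \in hE G ->
  proper_subhypergraph (del_edges G [set e]) G.
Proof.
move=> hG eE; split; first split=> //=.
- by move=> e'; rewrite inE => /andP [_ /hG].
- exact: subsetDl.
by move=> /(congr1 (@hE _)) /setP /(_ e); rewrite !inE eE eqxx.
Qed.

Lemma critical_del_edge_colorable G k e : is_hypergraph G -> critical G k.+1 ->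
  e \in hE G -> colorable (del_edges G [set e]) k.
Proof. by move=> hG crit /(del_edge_proper hG); exact: critical_proper_colorable. Qed.

(* A vertex lying in no edge could be colored freely, so criticality excludes it. *)
Lemma critical_covered G k x : is_hypergraph G -> 0 < k -> critical G k.+1 ->
  x \in hV G -> exists2 e, e \in hE G & x \in e.
Proof.
move=> hG k0 crit xV; apply: NNPP => nx.
have xE e : e \in hE G -> x \notin e by move=> eE; apply/negP => xe; apply: nx; exists e.
pose H := HG (hV G :\ x) (hE G).
have subH : proper_subhypergraph H G.
  split; first split=> //=.
  - move=> e eE; have [/subsetP eV e2] := hG e eE; split=> //; apply/subsetP=> y ye.
    by rewrite !inE eV // andbT; apply: contraNneq (xE e eE) => <-.
  - exact: subsetDl.
  - by move=> /(congr1 (@hV _)) /setP /(_ x); rewrite !inE eqxx xV.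
have [f [fV fE]] := critical_proper_colorable crit subH.
apply: (critical_not_colorable crit); exists (fun y => if y == x then 0 else f y); split.
  by move=> y yV; case: eqP => // /eqP yx; apply: fV; rewrite !inE yx.
move=> e eE; have [y [z [ye ze fyz]]] := fE e eE.
exists y, z; split=> //.
have [yx zx] : y != x /\ z != x by split; apply: contraNneq (xE e eE) => <-.
by rewrite (negbTE yx) (negbTE zx).
Qed.

Lemma colorable_succ_del_edge G k e : is_hypergraph G -> e \in hE G ->
  colorable (del_edges G [set e]) k -> colorable G k.+1.
Proof.
move=> hG eE [f [fV fE]].
have [x xe] : exists x, x \in e.
  by apply/set0Pn; rewrite -card_gt0; apply: leq_trans (proj2 (hG e eE)).
exists (fun y => if y == x then k else f y); split.
  by move=> y yV; case: eqP => // _; apply: leqW; apply: fV.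
move=> e' e'E; case: (boolP (x \in e')) => xe'.
  have [/subsetP e'V] := hG e' e'E; rewrite (cardsD1 x) xe' ltnS card_gt0.
  case/set0Pn=> y; rewrite !inE => /andP [yx ye'].
  exists x, y; split=> //; rewrite eqxx (negbTE yx) => fyk.
  by move: (fV y (e'V y ye')); rewrite -fyk ltnn.
have /fE [y [z [ye' ze' fyz]]] : e' \in hE (del_edges G [set e]).
  by rewrite !inE e'E andbT; apply: contraNneq xe' => ->.
have [yx zx] : y != x /\ z != x by split; apply: contraNneq xe' => <-.
by exists y, z; rewrite (negbTE yx) (negbTE zx).
Qed.

Lemma critical_of_del_edges G k : is_hypergraph G -> ~ colorable G k ->
  (forall x, x \in hV G -> exists2 e, e \in hE G & x \in e) ->
  (forall e, e \in hE G -> colorable (del_edges G [set e]) k) -> critical G k.+1.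
Proof.
move=> hG nG cover Gdel.
have [e eE] : exists e, e \in hE G.
  apply: NNPP => nE; apply: nG; exists (fun=> 0).
  by split=> [x /cover [e eE _] | e eE]; case: nE; exists e.
split.
  split=> [|m mk Gm]; first exact: colorable_succ_del_edge (Gdel e eE).
  by apply: nG; exact: colorable_le Gm.
move=> [VH EH] [[hH /= sVH sEH] neqH]; apply: colorable_chi.
case: (boolP (hE G \subset EH)) => [sEG | /subsetPn [e' e'E e'H]]; last first.
  have [f Gf] := Gdel e' e'E; exists f; apply: (coloring_sub Gf) => //=.
  apply/subsetP => e'' e''H; rewrite !inE (subsetP sEH) // andbT.
  by apply: contraNneq e'H => <-.
have EHE : EH = hE G by apply/eqP; rewrite eqEsubset sEH.
have VHE : VH = hV G.
  apply/eqP; rewrite eqEsubset sVH; apply/subsetP => x /cover [e' e'E xe'].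
  by rewrite -EHE in e'E; have [/subsetP sub _] := hH e' e'E; apply: sub.
by case: neqH; rewrite EHE VHE; destruct G.
Qed.

Lemma induced_hypergraph G X : is_hypergraph G -> is_hypergraph (induced G X).
Proof. by move=> hG e; rewrite inE => /andP [/hG [_ e2] eX]. Qed.

Lemma critical_induced_colorable G k X : is_hypergraph G -> critical G k.+1 ->
  X \proper hV G -> colorable (induced G X) k.
Proof.
move=> hG crit /properP [sXV [x xV xX]]; apply: (critical_proper_colorable crit).
split; first split=> //; first exact: induced_hypergraph.
  by apply/subsetP => e; rewrite inE => /andP [].
by move=> /(congr1 (@hV _)) /= eX; move: xX; rewrite eX xV.
Qed.

Lemma proper_edge_off f e A a : proper_edge f e -> (forall x, x \in e :&: A -> f x = a) ->
  exists2 y, y \in e :\: A & f y <> a.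
Proof.
move=> [x [y [xe ye fxy]]] fA; apply: NNPP => nf; apply: fxy.
have fa z : z \in e -> f z = a.
  move=> ze; case: (boolP (z \in A)) => zA; first by apply: fA; rewrite inE ze.
  by apply: NNPP => fz; apply: nf; exists z; rewrite // inE zA.
by rewrite !fa.
Qed.

Lemma coloring_induced_del_edge G k e A c : A \subset hV G -> ~~ (e \subset A) ->
  is_coloring (del_edges G [set e]) k c -> is_coloring (induced G A) k c.
Proof.
move=> sAV eA /coloring_sub; apply=> //; apply/subsetP => e'; rewrite !inE => /andP [e'E e'A].
by rewrite e'E andbT; apply: contraNneq eA => <-.
Qed.

Lemma img_const f A x : x \in A -> const_on f A -> img f A = [:: f x].
Proof.
move=> xA fA; rewrite /img.
have sub : {subset undup [seq f y | y <- enum A] <= [:: f x]}.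
  move=> i; rewrite mem_undup => /mapP [y]; rewrite mem_enum => yA ->.
  by rewrite (fA y x) ?mem_seq1.
have : f x \in undup [seq f y | y <- enum A] by rewrite mem_undup map_f ?mem_enum.
have := uniq_leq_size (undup_uniq _) sub.
by case: undup sub => [|a [|b s]] //= _ _; rewrite mem_seq1 => /eqP ->.
Qed.

Lemma mem_img f A i : reflect (exists2 x, x \in A & f x = i) (i \in img f A).
Proof.
rewrite /img mem_undup; apply: (iffP mapP) => [[x] | [x xA <-]].
  by rewrite mem_enum => xA ->; exists x.
by exists x; rewrite ?mem_enum.
Qed.

End Colorings.

Section ColorBijections.
Variable k : nat.
Hypothesis k_gt0 : 0 < k.

Definition color_bij (p : nat -> nat) :=
  (forall u, u < k -> p u < k) /\ (forall u v, u < k -> v < k -> p u = p v -> u = v).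

Definition color_shift t u := (u + t) %% k.

Definition color_swap (a b u : nat) : nat := if u == a then b else if u == b then a else u.

Lemma color_bij_id : color_bij id.
Proof. by []. Qed.

Lemma color_bij_comp p q : color_bij p -> color_bij q -> color_bij (p \o q).
Proof.
case=> pk pinj [qk qinj]; split=> [u uk | u v uk vk /pinj puv]; first exact/pk/qk.
by apply: qinj; rewrite // puv //; apply: qk.
Qed.

Lemma color_shift_inj_offset u s t : u < k -> s < k -> t < k ->
  color_shift s u = color_shift t u -> s = t.
Proof. by move=> uk sk tk /eqP; rewrite /color_shift eqn_modDl !modn_small // => /eqP. Qed.

Lemma color_bij_shift t : color_bij (color_shift t).
Proof.
split=> [u _ | u v uk vk /eqP]; first by rewrite ltn_pmod.
by rewrite /color_shift eqn_modDr !modn_small // => /eqP.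
Qed.

Lemma color_bij_swap a b : a < k -> b < k -> color_bij (color_swap a b).
Proof.
move=> ak bk; split=> [u uk | u v uk vk]; rewrite /color_swap.
  by case: ifP => _ //; case: ifP.
by repeat case: eqP; move=> *; lia.
Qed.

(* A rotation sends [b1] to [a1]; a transposition then fixes [a1] and moves the image of
   [b2] to [a2]. *)
Lemma color_bij_match a1 a2 b1 b2 : a1 < k -> a2 < k -> b1 < k -> b2 < k ->
  (b1 == b2) = (a1 == a2) -> exists p, [/\ color_bij p, p b1 = a1 & p b2 = a2].
Proof.
move=> a1k a2k b1k b2k eq12.
pose s := color_shift (k - b1 + a1).
have [sk sinj] := color_bij_shift (k - b1 + a1).
have sb1 : s b1 = a1.
  by rewrite /s /color_shift addnA subnKC ?(ltnW b1k) // modnDl modn_small.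
exists (color_swap a2 (s b2) \o s); split.
- by apply: color_bij_comp (color_bij_swap a2k (sk _ b2k)) _; exact: color_bij_shift.
- rewrite /= sb1 /color_swap; case: (eqVneq a1 a2) => [a12 | a12].
    by move: eq12; rewrite a12 eqxx => /eqP <-; rewrite sb1 a12.
  case: (eqVneq a1 (s b2)) => // a1s.
  have b12 : b1 = b2 by apply: sinj => //; exact: etrans sb1 a1s.
  by move: eq12; rewrite b12 eqxx (negbTE a12).
- by rewrite /= /color_swap eqxx; case: ifP => // /eqP.
Qed.

End ColorBijections.

Section EdgePatterns.
Variable T : finType.
Implicit Types (F : {set {set T}}) (A B : {set T}) (f g : T -> nat).

Definition meets F A := forall e, e \in F -> exists x, x \in e :&: A.

Definition edgewise_inj g B F :=
  forall e1 e2 y1 y2, e1 \in F -> e2 \in F -> e1 != e2 ->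
    y1 \in e1 :&: B -> y2 \in e2 :&: B -> g y1 <> g y2.

Definition complementary F A B f g :=
  forall e1 e2 x1 x2 y1 y2, e1 \in F -> e2 \in F -> e1 != e2 ->
    x1 \in e1 :&: A -> x2 \in e2 :&: A -> y1 \in e1 :&: B -> y2 \in e2 :&: B ->
    (f x1 == f x2) != (g y1 == g y2).

Lemma incident_partP F A x :
  reflect (exists2 e, e \in F & x \in e :&: A) (x \in incident_part A F).
Proof.
rewrite inE; apply: (iffP andP) => [[xA /existsP [e /andP [eF xe]]] | [e eF]].
  by exists e; rewrite // inE xe.
by rewrite inE => /andP [xe xA]; split=> //; apply/existsP; exists e; rewrite eF.
Qed.

Lemma edgewise_inj_not_const F B g :
  edgewise_inj g B F -> meets F B -> 1 < #|F| -> ~ const_on g (incident_part B F).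
Proof.
move=> ginj meetsB /card_gt1P [e1 [e2 [e1F e2F e12]]] gconst.
have [y1 y1e1] := meetsB _ e1F; have [y2 y2e2] := meetsB _ e2F.
apply: (ginj e1 e2 y1 y2) => //; apply: gconst; apply/incident_partP; by [exists e1 | exists e2].
Qed.

Variables (F : {set {set T}}) (A B : {set T}) (f g : T -> nat).

Lemma complementary_sym : complementary F A B f g -> complementary F B A g f.
Proof.
move=> cFfg e1 e2 y1 y2 x1 x2 e1F e2F e12 y1e1 y2e2 x1e1 x2e2.
by have := cFfg _ _ _ _ _ _ e1F e2F e12 x1e1 x2e2 y1e1 y2e2; case: (f _ == _); case: (g _ == _).
Qed.

Hypothesis cFfg : complementary F A B f g.
Hypothesis meetsA : meets F A.

Lemma complementary_const_inj : const_on f (incident_part A F) -> edgewise_inj g B F.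
Proof.
move=> fconst e1 e2 y1 y2 e1F e2F e12 y1e1 y2e2 gy12.
have [x1 x1e1] := meetsA e1F; have [x2 x2e2] := meetsA e2F.
have := cFfg e1F e2F e12 x1e1 x2e2 y1e1 y2e2.
rewrite gy12 (fconst x1 x2) ?eqxx //; apply/incident_partP; by [exists e1 | exists e2].
Qed.

Hypothesis meetsB : meets F B.
Hypothesis edge_const : forall e, e \in F -> const_on f (e :&: A) /\ const_on g (e :&: B).

Lemma complementary_const : const_on f (incident_part A F) \/ const_on g (incident_part B F).
Proof.
case: (classic (const_on f (incident_part A F))) => fconst; [by left | right].
have [x1 [x2 [/incident_partP [e1 e1F x1e1] /incident_partP [e2 e2F x2e2] fx12]]] :
    exists x1 x2, [/\ x1 \in incident_part A F, x2 \in incident_part A F & f x1 <> f x2].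
  apply: NNPP => nx; apply: fconst => x1 x2 x1A x2A.
  by apply: NNPP => fx12; apply: nx; exists x1, x2.
have e12 : e1 != e2.
  by apply: contra_notN fx12 => /eqP e12; rewrite e12 in x1e1; apply: (edge_const e2F).1.
have [y1 y1e1] := meetsB e1F; have [y2 y2e2] := meetsB e2F.
have gy12 : g y1 = g y2.
  by move: (cFfg e1F e2F e12 x1e1 x2e2 y1e1 y2e2); rewrite (introF eqP fx12) => /negPn /eqP.
(* A third edge with a different [B]-color would repeat the [A]-color of both [x1] and [x2]. *)
have gB e y : e \in F -> y \in e :&: B -> g y = g y1.
  move=> eF ye; case: (eqVneq e e1) => [ee1 | ee1].
    by rewrite ee1 in ye; exact: (edge_const e1F).2.
  case: (eqVneq e e2) => [ee2 | ee2].
    by rewrite ee2 in ye; rewrite gy12; exact: (edge_const e2F).2.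
  apply: NNPP => gy; have [x xe] := meetsA eF.
  move: (cFfg eF e1F ee1 xe x1e1 ye y1e1) (cFfg eF e2F ee2 xe x2e2 ye y2e2).
  rewrite -gy12 (introF eqP gy) !eqbF_neg !negbK => /eqP fx1 /eqP fx2.
  by apply: fx12; rewrite -fx1 -fx2.
move=> y y' /incident_partP [e eF ye] /incident_partP [e' e'F y'e'].
by rewrite (gB e y eF ye) (gB e' y' e'F y'e').
Qed.

End EdgePatterns.

Section Cuts.
Variables (T : finType) (G : hgraph T) (X : {set T}).
Let Y := hV G :\: X.
Let F := boundary G X.

Lemma boundary_witness e :
  e \in F -> [/\ e \in hE G, exists x, x \in e :&: X & exists y, y \in e :&: Y].
Proof.
rewrite inE => /andP [eE /andP [/set0Pn [x xeX] /set0Pn [y yeY]]].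
by split=> //; [exists x | exists y].
Qed.

Lemma boundary_edge e : e \in F -> e \in hE G.
Proof. by case/boundary_witness. Qed.

Lemma meets_boundary_in : meets F X.
Proof. by move=> e /boundary_witness []. Qed.

Lemma meets_boundary_out : meets F Y.
Proof. by move=> e /boundary_witness []. Qed.

Lemma boundary_not_subset_in e : e \in F -> ~~ (e \subset X).
Proof.
case/boundary_witness=> _ _ [y]; rewrite !inE => /and3P [ye yX _].
by apply/subsetPn; exists y.
Qed.

Lemma boundary_not_subset_out e : e \in F -> ~~ (e \subset Y).
Proof.
case/boundary_witness=> _ [x]; rewrite inE => /andP [xe xX] _.
by apply/subsetPn; exists x; rewrite // !inE xX.
Qed.

Lemma setD_compl : X \subset hV G -> hV G :\: Y = X.
Proof. by move=> sXV; rewrite setDDr setDv set0U (setIidPr sXV). Qed.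

Lemma boundary_compl : X \subset hV G -> boundary G Y = F.
Proof.
move=> sXV; apply/setP => e; rewrite !inE setD_compl //.
by congr andb; rewrite andbC.
Qed.

Lemma compl_neq0 : X \proper hV G -> Y != set0.
Proof. by case/properP=> _ [x xV xX]; apply/set0Pn; exists x; rewrite inE xX. Qed.

Lemma compl_proper : X != set0 -> X \subset hV G -> Y \proper hV G.
Proof.
move=> /set0Pn [x xX] sXV; rewrite properEneq subsetDl andbT.
by apply/eqP => /setP /(_ x); rewrite !inE xX (subsetP sXV).
Qed.

Lemma subset_out_not_in (e : {set T}) : 2 <= #|e| -> e \subset Y -> ~~ (e \subset X).
Proof.
move=> e2 /subsetP eY; have /set0Pn [y ye] : e != set0 by rewrite -card_gt0 (leq_trans _ e2).
by apply/subsetPn; exists y => //; have := eY y ye; rewrite inE => /andP [].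
Qed.

Lemma subset_in_not_out (e : {set T}) : 2 <= #|e| -> e \subset X -> ~~ (e \subset Y).
Proof.
move=> e2 /subsetP eX; have /set0Pn [x xe] : e != set0 by rewrite -card_gt0 (leq_trans _ e2).
by apply/subsetPn; exists x => //; rewrite inE eX.
Qed.

Hypothesis hG : is_hypergraph G.

Lemma edge_out e y : e \in hE G -> y \in e -> y \notin X -> y \in Y.
Proof. by move=> /hG [/subsetP eV _] ye yX; rewrite inE yX eV. Qed.

Lemma edge_inside e : e \in hE G -> e \notin F -> e \subset X \/ e \subset Y.
Proof.
move=> eE; rewrite inE eE /= negb_and !negbK => /orP [/eqP eX0 | /eqP eY0]; [right | left].
  apply/subsetP => y ye; apply: (edge_out eE ye).
  by apply/negP => yX; move: eX0 => /setP /(_ y); rewrite !inE ye yX.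
apply/subsetP => x xe; apply/negPn/negP => xX.
by move: eY0 => /setP /(_ x); rewrite in_setI xe (edge_out eE xe xX) inE.
Qed.

End Cuts.

Section GluedColorings.
Variables (T : finType) (G : hgraph T) (k : nat) (X : {set T}) (phi psi : T -> nat).
Let Y := hV G :\: X.
Let F := boundary G X.
Hypothesis hG : is_hypergraph G.
Hypothesis nG : ~ colorable G k.
Hypothesis k_gt0 : 0 < k.
Hypothesis card_F_le : #|F| <= k.
Hypothesis phi_col : is_coloring (induced G X) k phi.
Hypothesis psi_col : is_coloring (induced G Y) k psi.

Definition glue (p : nat -> nat) x := if x \in X then phi x else p (psi x).

Lemma glue_in p x : x \in X -> glue p x = phi x.
Proof. by rewrite /glue => ->. Qed.

Lemma glue_out p y : y \in Y -> glue p y = p (psi y).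
Proof. by rewrite /glue inE => /andP [/negbTE ->]. Qed.

Let psi_lt y : y \in Y -> psi y < k := psi_col.1 y.

Lemma glue_proper p e : color_bij k p -> e \in hE G -> e \notin F -> proper_edge (glue p) e.
Proof.
move=> [_ pinj] eE /(edge_inside hG eE) [eX | eY].
  have [x [y [xe ye phixy]]] : proper_edge phi e by apply: phi_col.2; rewrite inE eE.
  by exists x, y; rewrite !glue_in ?(subsetP eX).
have [x [y [xe ye psixy]]] : proper_edge psi e by apply: psi_col.2; rewrite inE eE.
have [xY yY] := (subsetP eY x xe, subsetP eY y ye).
by exists x, y; rewrite !glue_out //; split=> // pxy; apply: psixy; apply: pinj pxy; exact: psi_lt.
Qed.

Lemma glue_mono_boundary p : color_bij k p -> exists2 e, e \in F & const_on (glue p) e.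
Proof.
move=> pbij; apply: NNPP => nmono; apply: nG; exists (glue p); split.
  move=> x xV; rewrite /glue; case: ifP => xX; first exact: phi_col.1.
  by apply: pbij.1; apply: psi_lt; rewrite inE xX.
move=> e eE; case: (boolP (e \in F)) => eF; last exact: glue_proper.
by apply: NNPP => /not_proper_edge_const ?; apply: nmono; exists e.
Qed.

Lemma glue_mono_agree p q e : e \in F -> const_on (glue p) e -> const_on (glue q) e ->
  exists2 y, y \in Y & p (psi y) = q (psi y).
Proof.
case/boundary_witness=> _ [x /setIP [xe xX]] [y /setIP [ye yY]] pe qe.
by exists y; rewrite // -!glue_out // -(pe x) // -(qe x) // !glue_in.
Qed.

(* Distinct rotations disagree on every color, so they cannot share a monochromatic edge. *)
Lemma shift_mono_edges p : color_bij k p -> exists f : 'I_k -> {set T},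
  [/\ injective f, F = f @: 'I_k & forall t : 'I_k, const_on (glue (color_shift k t \o p)) (f t)].
Proof.
move=> pbij; have [pk _] := pbij.
have /fin_all_exists [f fP] :
    forall t : 'I_k, exists e, e \in F /\ const_on (glue (color_shift k t \o p)) e.
  move=> t; have [e eF emono] := glue_mono_boundary (color_bij_comp (color_bij_shift k_gt0 t) pbij).
  by exists e.
have finj : injective f.
  move=> s t fst; apply: val_inj; have [sF smono] := fP s; have [_] := fP t.
  rewrite -fst => tmono; have [y yY] := glue_mono_agree sF smono tmono.
  by apply: color_shift_inj_offset => //; apply/pk/psi_lt.
have sub : f @: 'I_k \subset F by apply/subsetP => _ /imsetP [t _ ->]; case: (fP t).
exists f; split=> //; last by move=> t; case: (fP t).
by apply/eqP; rewrite eq_sym eqEcard sub card_imset // card_ord.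
Qed.

Lemma card_boundary : #|F| = k.
Proof.
have [f [finj -> _]] := shift_mono_edges (color_bij_id k).
by rewrite card_imset // card_ord.
Qed.

Lemma boundary_mono_shift p e : color_bij k p -> e \in F ->
  exists t, const_on (glue (color_shift k t \o p)) e.
Proof. by move=> /shift_mono_edges [f [_ -> fmono]] /imsetP [t _ ->]; exists t. Qed.

Lemma boundary_mono_unique p e e' : color_bij k p -> e \in F -> e' \in F ->
  const_on (glue p) e -> const_on (glue p) e' -> e = e'.
Proof.
move=> pbij; have [f [_ FE fmono]] := shift_mono_edges pbij.
have f0 e1 : e1 \in F -> const_on (glue p) e1 -> exists2 t, e1 = f t & val t = 0.
  move=> e1F e1mono; have := e1F; rewrite FE => /imsetP [t _ e1t].
  exists t => //; rewrite e1t in e1F e1mono.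
  have [y yY] := glue_mono_agree e1F e1mono (fmono t).
  have pyk : p (psi y) < k by apply/pbij.1/psi_lt.
  rewrite /= -[X in X = _](modn_small pyk) -[X in X %% k](addn0 (p (psi y))).
  by move/(color_shift_inj_offset pyk k_gt0 (ltn_ord t)).
move=> eF e'F emono e'mono; have [t -> t0] := f0 e eF emono; have [t' -> t'0] := f0 e' e'F e'mono.
by congr f; apply: val_inj; rewrite t0 t'0.
Qed.

Lemma boundary_sides_const e : e \in F -> const_on phi (e :&: X) /\ const_on psi (e :&: Y).
Proof.
move=> /(boundary_mono_shift (color_bij_id k)) [t emono]; split=> x y /setIP [xe xX] /setIP [ye yX].
  by rewrite -(glue_in (color_shift k t) xX) -(glue_in (color_shift k t) yX); apply: emono.
have := emono x y xe ye; rewrite !glue_out //.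
by apply: (color_bij_shift k_gt0 t).2; apply: psi_lt.
Qed.

(* If the two patterns agreed, a single color bijection would make both edges monochromatic. *)
Lemma glued_complementary : complementary F X Y phi psi.
Proof.
move=> e1 e2 x1 x2 y1 y2 e1F e2F e12 x1e1 x2e2 y1e1 y2e2; apply/negP => /eqP eq12.
have lt_phi x e : x \in e :&: X -> phi x < k by case/setIP => _; exact: phi_col.1.
have lt_psi y e : y \in e :&: Y -> psi y < k by case/setIP => _; exact: psi_lt.
have [p [pbij py1 py2]] := color_bij_match k_gt0 (lt_phi _ _ x1e1) (lt_phi _ _ x2e2)
  (lt_psi _ _ y1e1) (lt_psi _ _ y2e2) (esym eq12).
have mono e x y : e \in F -> x \in e :&: X -> y \in e :&: Y -> p (psi y) = phi x ->
    const_on (glue p) e.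
  move=> eF xeX yeY pyx; have [cX cY] := boundary_sides_const eF.
  have gx z : z \in e -> glue p z = phi x.
    move=> ze; case: (boolP (z \in X)) => zX; first by rewrite glue_in // (cX z x) // inE ze.
    have zY := edge_out hG (boundary_edge eF) ze zX.
    by rewrite glue_out // (cY z y) // inE ze.
  by move=> z z' ze z'e; rewrite !gx.
move: e12; rewrite (boundary_mono_unique pbij e1F e2F (mono _ _ _ e1F x1e1 y1e1 py1)
  (mono _ _ _ e2F x2e2 y2e2 py2)).
by rewrite eqxx.
Qed.

End GluedColorings.

(* Part (a) of the theorem in the form in which the gluing argument produces it. *)
Definition rigid_cut (T : finType) (G : hgraph T) k X :=
  let Y := hV G :\: X in
  let F := boundary G X in
  [/\ forall phi, is_coloring (induced G X) k phi -> const_on phi (incident_part X F),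
      forall psi, is_coloring (induced G Y) k psi -> forall e, e \in F -> const_on psi (e :&: Y) &
      forall psi, is_coloring (induced G Y) k psi -> edgewise_inj psi Y F].

Lemma rigid_side (T : finType) (G : hgraph T) k X : is_hypergraph G -> 1 < k ->
  critical G k.+1 -> X != set0 -> X \proper hV G -> #|boundary G X| <= k ->
  #|boundary G X| = k /\ (rigid_cut G k X \/ rigid_cut G k (hV G :\: X)).
Proof.
move=> hG k_gt1 crit X_neq0 XV card_F_le; have sXV := proper_sub XV.
have nG := critical_not_colorable crit; have k_gt0 := ltnW k_gt1.
have [phi0 phi0_col] := critical_induced_colorable hG crit XV.
have [psi0 psi0_col] := critical_induced_colorable hG crit (compl_proper X_neq0 sXV).
have card_F := card_boundary hG nG k_gt0 card_F_le phi0_col psi0_col.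
have sides := boundary_sides_const hG nG k_gt0 card_F_le.
have compl := glued_complementary hG nG k_gt0 card_F_le.
have meetsX : meets (boundary G X) X := @meets_boundary_in _ G X.
have meetsY : meets (boundary G X) (hV G :\: X) := @meets_boundary_out _ G X.
have one_const phi psi phi_col psi_col :=
  complementary_const (compl phi psi phi_col psi_col) meetsX meetsY (sides phi psi phi_col psi_col).
split=> //; case: (classic (const_on phi0 (incident_part X (boundary G X)))) => phi0_const.
  have psi_inj psi psi_col :=
    complementary_const_inj (compl phi0 psi phi0_col psi_col) meetsX phi0_const.
  left; split=> [phi phi_col | psi psi_col e eF | psi psi_col].
  - have [//|psi0_const] := one_const _ _ phi_col psi0_col.
    have F_gt1 : 1 < #|boundary G X| by rewrite card_F.
    by case: (edgewise_inj_not_const (psi_inj _ psi0_col) meetsY F_gt1).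
  - exact: (sides _ _ phi0_col psi_col e eF).2.
  - exact: psi_inj.
have psi_const psi : is_coloring (induced G (hV G :\: X)) k psi ->
    const_on psi (incident_part (hV G :\: X) (boundary G X)).
  by move=> psi_col; case: (one_const _ _ phi0_col psi_col).
right; rewrite /rigid_cut setD_compl // boundary_compl //.
split=> [psi psi_col | phi phi_col e eF | phi phi_col].
- exact: psi_const.
- exact: (sides _ _ phi_col psi0_col e eF).1.
- have compl_sym := complementary_sym (compl _ _ phi_col psi0_col).
  exact: complementary_const_inj compl_sym meetsY (psi_const _ psi0_col).
Qed.

Section RigidCut.
Variables (T : finType) (G : hgraph T) (k : nat) (X : {set T}).
Let Y := hV G :\: X.
Let F := boundary G X.
Let XF := incident_part X F.
Let YF := incident_part Y F.
Hypothesis hG : is_hypergraph G.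
Hypothesis k_gt1 : 1 < k.
Hypothesis crit : critical G k.+1.
Hypothesis X_neq0 : X != set0.
Hypothesis XV : X \proper hV G.
Hypothesis card_F : #|F| = k.
Hypothesis rigid : rigid_cut G k X.

Let k_gt0 : 0 < k := ltnW k_gt1.
Let sXV : X \subset hV G := proper_sub XV.

Lemma rigid_in_const phi : is_coloring (induced G X) k phi -> const_on phi XF.
Proof. by case: rigid => + _ _; apply. Qed.

Lemma rigid_out_edge_const psi e : is_coloring (induced G Y) k psi -> e \in F ->
  const_on psi (e :&: Y).
Proof. by move=> psi_col eF; case: rigid => _ h _; exact: h. Qed.

Lemma rigid_out_inj psi : is_coloring (induced G Y) k psi -> edgewise_inj psi Y F.
Proof. by case: rigid => _ _; apply. Qed.

Lemma boundary_neq0 : F != set0.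
Proof. by rewrite -card_gt0 card_F. Qed.

Lemma incident_in_neq0 : exists x, x \in XF.
Proof.
have /set0Pn [e eF] := boundary_neq0; have [x xe] := meets_boundary_in eF.
by exists x; apply/incident_partP; exists e.
Qed.

(* Pigeonhole: the [k] edges of [F] carry pairwise distinct colors on [Y]. *)
Lemma rigid_color_classes psi i : is_coloring (induced G Y) k psi -> i < k ->
  exists2 e, e \in F & forall y, y \in e :&: Y -> psi y = i.
Proof.
move=> psi_col ik.
pose c e := oapp psi 0 [pick y in e :&: Y].
have cE e y : e \in F -> y \in e :&: Y -> psi y = c e.
  move=> eF ye; rewrite /c; case: pickP => [z ze | /(_ y)] /=; last by rewrite ye.
  exact: (rigid_out_edge_const psi_col eF).
have ck e : e \in F -> c e < k.
  move=> eF; have [y ye] := meets_boundary_out eF; rewrite -(cE e y) //.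
  by apply: psi_col.1; case/setIP: ye.
have c_uniq : uniq [seq c e | e <- enum F].
  rewrite map_inj_in_uniq ?enum_uniq // => e1 e2; rewrite !mem_enum => e1F e2F c12.
  apply: NNPP => /eqP e12; have [y1 y1e1] := meets_boundary_out e1F.
  have [y2 y2e2] := meets_boundary_out e2F.
  by apply: (rigid_out_inj psi_col e1F e2F e12 y1e1 y2e2); rewrite (cE e1) // (cE e2).
have c_sub : {subset [seq c e | e <- enum F] <= iota 0 k}.
  by move=> j /mapP [e]; rewrite mem_enum mem_iota add0n => eF ->; apply: ck.
have c_size : size (iota 0 k) <= size [seq c e | e <- enum F].
  by rewrite size_iota size_map -cardE card_F.
have [_ c_all] := uniq_min_size c_uniq c_sub c_size.
have : i \in iota 0 k by rewrite mem_iota add0n.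
by rewrite -c_all => /mapP [e]; rewrite mem_enum => eF ->; exists e => // y; apply: cE.
Qed.

Lemma img_incident_in phi : is_coloring (induced G X) k phi -> size (img phi XF) = 1.
Proof.
move=> phi_col; have [x xXF] := incident_in_neq0.
by rewrite (img_const xXF (rigid_in_const phi_col)).
Qed.

Lemma img_incident_out psi : is_coloring (induced G Y) k psi ->
  size (img psi YF) = k /\
  forall i, i < k -> exists e, e \in F /\ img psi (e :&: Y) = [:: i].
Proof.
move=> psi_col; split.
  apply/eqP; rewrite eqn_leq -{1 2}(size_iota 0 k); apply/andP; split.
    apply: uniq_leq_size (undup_uniq _) _ => _ /mem_img [y /incident_partP [e _] /setIP [_ yY] <-].
    by rewrite mem_iota add0n; apply: psi_col.1.
  apply: uniq_leq_size (iota_uniq _ _) _ => i; rewrite mem_iota add0n => ik.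
  have [e eF ei] := rigid_color_classes psi_col ik; have [y ye] := meets_boundary_out eF.
  by apply/mem_img; exists y; [apply/incident_partP; exists e | apply: ei].
move=> i ik; have [e eF ei] := rigid_color_classes psi_col ik; exists e; split=> //.
have [y ye] := meets_boundary_out eF; rewrite (img_const ye) ?ei // => z z' ze z'e.
by rewrite !ei.
Qed.

Lemma incident_out_unique y : y \in YF -> #|[set e in F | y \in e]| = 1.
Proof.
case/incident_partP=> e0 e0F ye0; have [psi psi_col] :=
  critical_induced_colorable hG crit (compl_proper X_neq0 sXV).
suff -> : [set e in F | y \in e] = [set e0] by rewrite cards1.
apply/setP => e; rewrite in_set in_set1; apply/andP/eqP => [[eF ye] | ->]; last first.
  by split=> //; case/setIP: ye0.
apply: NNPP => /eqP e_e0; apply: (rigid_out_inj psi_col eF e0F e_e0 _ ye0) => //.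
by rewrite inE ye; case/setIP: ye0.
Qed.

Section AddedEdge.
Hypothesis XF_gt1 : 1 < #|XF|.
Let C := add_edge (induced G X) XF.

Lemma incident_in_sub : XF \subset X.
Proof. by apply/subsetP => x; rewrite inE => /andP []. Qed.

Lemma add_edge_hypergraph : is_hypergraph C.
Proof.
move=> e; rewrite in_setU1 => /predU1P [-> | ]; first by split=> //; exact: incident_in_sub.
exact: induced_hypergraph.
Qed.

Lemma add_edge_not_colorable : ~ colorable C k.
Proof.
move=> [c c_col]; have [_ /(_ XF (setU11 _ _)) [x [y [xXF yXF cxy]]]] := c_col.
by apply: cxy; apply: (rigid_in_const (coloring_sub c_col _ _)) => //=; exact: subsetUr.
Qed.

Lemma add_edge_covered x : x \in hV C -> exists2 e, e \in hE C & x \in e.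
Proof.
move=> /= xX; have [e eE xe] := critical_covered hG k_gt0 crit (subsetP sXV x xX).
case: (boolP (e \in F)) => eF.
  by exists XF; rewrite ?setU11 //; apply/incident_partP; exists e; rewrite // inE xe.
case: (edge_inside hG eE eF) => [eX | eY]; first by exists e; rewrite // !inE eE eX orbT.
by move: (subsetP eY x xe); rewrite inE xX.
Qed.

(* For [e] inside [X], a coloring of [G - e] keeps [X_F] bichromatic: the edge of [F] whose
   [Y]-part has the color of a vertex of [X_F] needs a second color, and it lies on [X_F]. *)
Lemma add_edge_del_colorable e : e \in hE C -> colorable (del_edges C [set e]) k.
Proof.
have [phi phi_col] := critical_induced_colorable hG crit XV.
case: (eqVneq e XF) => [-> _ | eXF].
  exists phi; apply: coloring_sub phi_col _ _ => //=.
  by apply/subsetP => e'; rewrite !inE => /andP [/negbTE -> ].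
rewrite in_setU1 (negbTE eXF) /= inE => /andP [eE eX].
have [c c_col] := critical_del_edge_colorable hG crit eE.
have [_ e2] := hG eE.
have cY : is_coloring (induced G Y) k c.
  exact: coloring_induced_del_edge (subsetDl _ _) (subset_in_not_out G e2 eX) c_col.
exists c; split=> [x xX | e']; first by apply: c_col.1; exact: subsetP sXV x xX.
rewrite in_setD1 in_setU1 => /andP [e'e /predU1P [-> | e'EX]]; last first.
  by apply: c_col.2; move: e'EX; rewrite !inE e'e => /andP [->].
have [x0 x0XF] := incident_in_neq0.
have x0X : x0 \in X := subsetP incident_in_sub x0 x0XF.
have [e1 e1F e1c] := rigid_color_classes cY (c_col.1 x0 (subsetP sXV x0 x0X)).
have e1E := boundary_edge e1F.
have e1e : e1 != e by apply: contraNneq (boundary_not_subset_in e1F) => ->.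
have e1_proper : proper_edge c e1 by apply: c_col.2; rewrite in_setD1 e1e.
have [z /setDP [ze1 zY] cz] := proper_edge_off e1_proper e1c.
have zX : z \in X by apply/negPn/negP => zX; move: zY; rewrite (edge_out hG e1E ze1 zX).
by exists z, x0; split=> //; apply/incident_partP; exists e1; rewrite // inE ze1.
Qed.

Lemma add_edge_critical : critical C k.+1.
Proof.
apply: critical_of_del_edges add_edge_not_colorable add_edge_covered add_edge_del_colorable.
exact: add_edge_hypergraph.
Qed.

End AddedEdge.

Section GluedVertex.
Let D := glue_new_vertex G X F.
Let new_edge (e : {set T}) := [set Some y | y : T in e :\: X] :|: [set None].

Definition extend_color (a : nat) (c : T -> nat) (u : option T) :=
  if u is Some y then c y else a.

Lemma boundary_setD_out e : e \in F -> e :\: X \subset Y.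
Proof.
move=> eF; apply/subsetP => y /setDP [ye yX].
exact: (edge_out hG (boundary_edge eF) ye yX).
Qed.

Lemma glued_hypergraph : is_hypergraph D.
Proof.
move=> u; rewrite in_setU => /orP [/imsetP [e eF ->] | /imsetP [e eEY ->]].
  split.
    apply/subsetP => w; rewrite in_setU in_set1 in_setU1 => /orP [/imsetP [y ye ->] | ->] //.
    by rewrite imset_f ?orbT // (subsetP (boundary_setD_out eF)).
  have [y /setIP [ye yY]] := meets_boundary_out eF.
  apply/card_gt1P; exists (Some y), None; rewrite !inE eqxx orbT imset_f //.
  by rewrite inE ye; case/setDP: yY => _ ->.
move: eEY; rewrite inE => /andP [/hG [_ e2] eY]; split.
  by apply/subsetP => _ /imsetP [y ye ->]; rewrite in_setU1 imset_f ?orbT // (subsetP eY).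
by rewrite card_imset //; exact: Some_inj.
Qed.

Lemma new_edge_in_glued e : e \in F -> new_edge e \in hE D.
Proof. by move=> eF; rewrite in_setU imset_f. Qed.

Lemma old_edge_in_glued e : e \in hE (induced G Y) -> [set Some y | y : T in e] \in hE D.
Proof. by move=> eEY; rewrite in_setU imset_f ?orbT. Qed.

Lemma glued_not_colorable : ~ colorable D k.
Proof.
move=> [c [cV cE]].
have psi_col : is_coloring (induced G Y) k (c \o Some).
  split=> [y yY | e eEY]; first by apply: cV; rewrite in_setU1 imset_f ?orbT.
  have [_ [_ [/imsetP [x xe ->] /imsetP [y ye ->] cxy]]] := cE _ (old_edge_in_glued eEY).
  by exists x, y.
have [e eF ec] := rigid_color_classes psi_col (cV None (setU11 _ _)).
have [u [v [ue ve cuv]]] := cE _ (new_edge_in_glued eF).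
have cN w : w \in new_edge e -> c w = c None.
  rewrite in_setU in_set1 => /orP [/imsetP [y ye ->] | /eqP -> //].
  by apply: ec; rewrite inE (subsetP (boundary_setD_out eF)) // andbT; case/setDP: ye.
by apply: cuv; rewrite !cN.
Qed.

Lemma glued_covered w : w \in hV D -> exists2 u, u \in hE D & w \in u.
Proof.
rewrite in_setU1 => /predU1P [-> | /imsetP [y yY ->]].
  have /set0Pn [e eF] := boundary_neq0; exists (new_edge e); first exact: new_edge_in_glued.
  by rewrite in_setU set11 orbT.
have [yV yX] : y \in hV G /\ y \notin X by move: yY; rewrite inE => /andP [].
have [e eE ye] := critical_covered hG k_gt0 crit yV.
case: (boolP (e \in F)) => eF.
  by exists (new_edge e); rewrite ?new_edge_in_glued // in_setU imset_f // inE yX.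
case: (edge_inside hG eE eF) => [eX | eY]; first by move: yX; rewrite (subsetP eX).
by exists [set Some y | y : T in e]; rewrite ?imset_f // old_edge_in_glued // inE eE.
Qed.

(* Give the new vertex the common color of [X_F]; every edge of [F] other than [e0] then
   still sees a second color in [Y]. *)
Lemma extend_del_edge_proper e0 c : e0 \in hE G -> ~~ (e0 \subset X) ->
  is_coloring (del_edges G [set e0]) k c -> exists a, [/\ a < k,
    forall e, e \in F -> e != e0 -> proper_edge (extend_color a c) (new_edge e) &
    forall e, e \in hE (induced G Y) -> e != e0 ->
      proper_edge (extend_color a c) [set Some y | y : T in e]].
Proof.
move=> e0E e0X c_col; have cX := coloring_induced_del_edge sXV e0X c_col.
have [x0 x0XF] := incident_in_neq0; have [x0X _] := setIdP x0XF.
exists (c x0); split; first exact: c_col.1 x0 (subsetP sXV x0 x0X).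
  move=> e eF ee0; have e_proper : proper_edge c e.
    by apply: c_col.2; rewrite in_setD1 ee0 (boundary_edge eF).
  have [y /setDP [ye yX] cy] : exists2 y, y \in e :\: X & c y <> c x0.
    apply: (proper_edge_off e_proper) => x /setIP [xe xX]; apply: (rigid_in_const cX) => //.
    by apply/incident_partP; exists e; rewrite // inE xe.
  by exists (Some y), None; rewrite !inE eqxx orbT imset_f // inE ye yX.
move=> e; rewrite inE => /andP [eE _] ee0.
have [x [y [xe ye cxy]]] : proper_edge c e by apply: c_col.2; rewrite in_setD1 ee0.
by exists (Some x), (Some y); rewrite !imset_f.
Qed.

Lemma glued_del_colorable u : u \in hE D -> colorable (del_edges D [set u]) k.
Proof.
move=> uE; have [e0 [e0E e0X ne_new ne_old]] : exists e0, [/\ e0 \in hE G, ~~ (e0 \subset X),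
    forall e, e \in F -> new_edge e != u -> e != e0 &
    forall e, e \in hE (induced G Y) -> [set Some y | y : T in e] != u -> e != e0].
  move: uE; rewrite in_setU => /orP [/imsetP [e0 e0F ->] | /imsetP [e0 e0EY ->]].
    exists e0; split=> [||e _|e]; first exact: boundary_edge e0F.
    - exact: boundary_not_subset_in e0F.
    - by apply: contraNneq => ->.
    rewrite inE => /andP [_ eY] _; apply: contraTneq eY => ->; exact: boundary_not_subset_out e0F.
  move: e0EY; rewrite inE => /andP [e0E e0Y]; have [_ e02] := hG e0E.
  exists e0; split=> [||e eF _|e _] //; first exact: subset_out_not_in e02 e0Y.
    by apply: contraTneq e0Y => <-; exact: boundary_not_subset_out eF.
  by apply: contraNneq => ->.
have [c c_col] := critical_del_edge_colorable hG crit e0E.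
have [a [ak new_proper old_proper]] := extend_del_edge_proper e0E e0X c_col.
exists (extend_color a c); split=> [[y|] //= | u'].
  by rewrite in_setU1 /= => /imsetP [z zY [->]]; apply: c_col.1; case/setDP: zY.
move=> /setD1P [u'u /setUP [/imsetP [e eF eu] | /imsetP [e eEY eu]]]; subst u'.
  exact: new_proper eF (ne_new e eF u'u).
exact: old_proper eEY (ne_old e eEY u'u).
Qed.

Lemma glued_critical : critical D k.+1.
Proof.
apply: critical_of_del_edges glued_not_colorable glued_covered glued_del_colorable.
exact: glued_hypergraph.
Qed.

End GluedVertex.

Lemma rigid_cut_properties :
  [/\ (forall phi, is_coloring (induced G X) k phi -> size (img phi XF) = 1) /\
      (forall psi, is_coloring (induced G Y) k psi ->
         size (img psi YF) = k /\
         forall i, i < k -> exists e, e \in F /\ img psi (e :&: Y) = [:: i]),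
      forall y, y \in YF -> #|[set e in F | y \in e]| = 1,
      2 <= #|XF| -> critical (add_edge (induced G X) XF) k.+1 &
      critical (glue_new_vertex G X F) k.+1].
Proof.
split; [split | | |].
- exact: img_incident_in.
- exact: img_incident_out.
- exact: incident_out_unique.
- exact: add_edge_critical.
- exact: glued_critical.
Qed.

End RigidCut.

Lemma adj_sym (T : finType) (G : hgraph T) : symmetric (adj G).
Proof. by move=> x y; apply: eq_existsb => e; rewrite (andbC (x \in e)). Qed.

Lemma separating_cut (T : finType) (G : hgraph T) F : separating G F ->
  exists X, [/\ X != set0, X \proper hV G & boundary G X \subset F].
Proof.
move=> [sFE comp_lt]; set G' := del_edges G F.
have comp0 : 0 < #|components G|.
  have /card_gt0P [_ /imsetP [x xV _]] : 0 < #|components G'|.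
    exact: leq_ltn_trans (leq0n _) comp_lt.
  by apply/card_gt0P; exists [set y in hV G | connect (adj G) x y]; apply: imset_f.
have /card_gt1P [_ [_ [/imsetP [x1 x1V ->] /imsetP [x2 x2V ->] C12]]] :=
  leq_ltn_trans comp0 comp_lt.
have conn_sym := sym_connect_sym (adj_sym G').
exists [set y in hV G | connect (adj G') x1 y]; split.
- by apply/set0Pn; exists x1; rewrite inE x1V connect0.
- rewrite properEneq; apply/andP; split; last by apply/subsetP => y; rewrite inE => /andP [].
  apply: contra C12 => /eqP C1V; have := x2V; rewrite -[in X in X -> _]C1V inE => /andP [_ c12].
  apply/eqP/setP => y; rewrite !inE; congr andb; apply/idP/idP => [c1y | ].
    by apply: connect_trans c1y; rewrite conn_sym.
  exact: connect_trans c12.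
- apply/subsetP => e; rewrite inE => /andP [eE /andP [/set0Pn [x] xeC /set0Pn [y]]].
  rewrite !inE => /andP [ye /andP [yC yV]]; move: xeC; rewrite !inE => /andP [xe /andP [_ c1x]].
  apply: contraR yC => eF; rewrite yV /=; apply: connect_trans c1x (connect1 _).
  by apply/existsP; exists e; rewrite xe ye !andbT inE eE andbT.
Qed.

Unset Implicit Arguments.

Theorem theorem12 (T : finType) (G : hgraph T) (k : nat) (F : {set {set T}}) :
  is_hypergraph G -> 2 <= k -> critical G k.+1 ->
  separating G F -> #|F| <= k ->
  #|F| = k /\
  exists X : {set T},
    let Y := hV G :\: X in
    let XF := incident_part X F in
    let YF := incident_part Y F in
    (* (X, Y, F) is an edge cut of G *)
    [/\ X != set0, X \proper hV G & F = boundary G X] /\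
    [/\ (* (a) *)
        (forall phi, is_coloring (induced G X) k phi -> size (img phi XF) = 1) /\
        (forall phi, is_coloring (induced G Y) k phi ->
           size (img phi YF) = k /\
           forall i, i < k -> exists e, e \in F /\ img phi (e :&: Y) = [:: i]),
        (* (b) *)
        (forall y, y \in YF -> #|[set e in F | y \in e]| = 1),
        (* (c) *)
        (2 <= #|XF| -> critical (add_edge (induced G X) XF) k.+1) &
        (* (d) *)
        critical (glue_new_vertex G X F) k.+1].
Proof.
move=> hG k_gt1 crit /separating_cut [X0 [X0_neq0 X0V sub]] card_F_le.
have card_X0_le : #|boundary G X0| <= k := leq_trans (subset_leq_card sub) card_F_le.
have [card_X0 rigid] := rigid_side hG k_gt1 crit X0_neq0 X0V card_X0_le.
have -> : F = boundary G X0 by apply/eqP; rewrite eq_sym eqEcard sub card_X0 card_F_le.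
split=> //; have sXV := proper_sub X0V; case: rigid => [rigidX | rigidY].
  by exists X0; split; last exact: rigid_cut_properties.
have card_Y0 : #|boundary G (hV G :\: X0)| = k by rewrite boundary_compl.
exists (hV G :\: X0); rewrite -(boundary_compl sXV); split.
  by split=> //; [exact: compl_neq0 | exact: compl_proper].
exact: rigid_cut_properties (compl_neq0 X0V) (compl_proper X0_neq0 sXV) card_Y0 rigidY.
Qed.
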